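(* Assume the bipartite graph $\mathcal{T}$ is a tree of diameter $3$. There is a constant $m_5$ with the following property. Fix $T>0$ and let measurable locally bounded $(\psi,y,z,w)$ on $[0,T]$ satisfy $$\text{(S1)}\ \sum_{j\in\mathcal{J}}(\psi_{ij}+\mu_{ij}\mathfrak{J}\psi_{ij})=w_i-y_i-\theta_i\mathfrak{J}y_i,\ i\in\mathcal{I};\quad \text{(S2)}\ \sum_{i\in\mathcal{I}}\psi_{ij}=-z_j,\ j\in\mathcal{J};\quad \text{(S3)}\ y_i,z_j\ge0;\quad \text{(S4)}\ \min(e\cdot y,e\cdot z)=0$$ on $[0,T]$ (with $\psi_{ij}=0$ for $i\not\sim j$). Let bounded measurable functions $f_i\ge0$, $i\in\mathcal{I}$, be given. Then there exist $(\hat\psi,\hat y,\hat z,\hat w)$ defined on $[0,T]$ satisfying (S1)–(S4) on $[0,T]$, such that $e\cdot\hat y\ge e\cdot y$, $e\cdot\hat z\le e\cdot z$, and $\hat w_i=w_i+f_i+\eta_i$ for $i\in\mathcal{I}$, where each $\eta_i$ is nondecreasing and continuous with $0\le\eta_i\le m_5T\sum_{i'\in\mathcal{I}}|f_{i'}|_T^*$ on $[0,T]$. The constant $m_5$ does not depend on $T$, $f_i$, $\psi,y,z,w$.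
   Context: $\mathcal{I}=\{1,\dots,I\}$, $\mathcal{J}=\{I+1,\dots,I+J\}$, $\mathcal{E}\subset\mathcal{I}\times\mathcal{J}$, $i\sim j$ iff $(i,j)\in\mathcal{E}$; $\mathcal{T}$ is the bipartite graph with vertices $\mathcal{I}\cup\mathcal{J}$ and edges $\mathcal{E}$. Constants $\mu_{ij}>0$ for $(i,j)\in\mathcal{E}$, $\mu_{ij}=0$ otherwise, $\theta_i\ge0$. $\mathfrak{J}f(t)=\int_0^tf(s)ds$, $|f|_T^*=\sup_{0\le s\le T}|f(s)|$, $e=(1,\dots,1)'$. *)

From HB Require Import structures.
From mathcomp Require Import all_boot all_order all_algebra.
From mathcomp Require Import all_classical all_reals all_analysis.
Set Implicit Arguments. Unset Strict Implicit. Unset Printing Implicit Defensive.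
Import Order.TTheory GRing.Theory Num.Theory.
Import numFieldNormedType.Exports.
Local Open Scope classical_set_scope.
Local Open Scope ring_scope.

Definition vert (nI nJ : nat) : finType := ('I_nI + 'I_nJ)%type.

Definition adj (nI nJ : nat) (E : {set 'I_nI * 'I_nJ}) : rel (vert nI nJ) :=
  fun u v => match u, v with
             | inl i, inr j => (i, j) \in E
             | inr j, inl i => (i, j) \in E
             | _, _ => false
             end.

Definition connected_graph (nI nJ : nat) (E : {set 'I_nI * 'I_nJ}) : Prop :=
  forall u v : vert nI nJ, connect (adj E) u v.

Definition acyclic_graph (nI nJ : nat) (E : {set 'I_nI * 'I_nJ}) : Prop :=
  forall c : seq (vert nI nJ), uniq c -> (3 <= size c)%N -> ~~ cycle (adj E) c.

Definition is_tree (nI nJ : nat) (E : {set 'I_nI * 'I_nJ}) : Prop :=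
  connected_graph E /\ acyclic_graph E.

Definition dist_le (nI nJ : nat) (E : {set 'I_nI * 'I_nJ}) (u v : vert nI nJ) (k : nat) : Prop :=
  exists p : seq (vert nI nJ), [/\ path (adj E) u p, last u p = v & (size p <= k)%N].

Definition diameter_eq (nI nJ : nat) (E : {set 'I_nI * 'I_nJ}) (k : nat) : Prop :=
  (forall u v : vert nI nJ, dist_le E u v k) /\
  (exists u v : vert nI nJ, forall k', (k' < k)%N -> ~ dist_le E u v k').

Definition Jint {R : realType} (f : R -> R) (t : R) : R :=
  (\int[@lebesgue_measure R]_(s in `[0, t]) f s)%R.

Definition supnormT {R : realType} (T : R) (f : R -> R) : R :=
  sup [set `|f s| | s in `[0, T]].

Definition regular_on {R : realType} (T : R) (f : R -> R) : Prop :=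
  measurable_fun `[0, T] f /\ exists M : R, forall t, t \in `[0, T] -> `|f t| <= M.

Definition system_S {R : realType} (nI nJ : nat) (E : {set 'I_nI * 'I_nJ})
  (mu : 'I_nI -> 'I_nJ -> R) (theta : 'I_nI -> R) (T : R)
  (psi : 'I_nI -> 'I_nJ -> R -> R) (y : 'I_nI -> R -> R) (z : 'I_nJ -> R -> R)
  (w : 'I_nI -> R -> R) : Prop :=
  forall t, t \in `[0, T] ->
    [/\ (forall i j, (i, j) \notin E -> psi i j t = 0),
        (forall i, \sum_(j < nJ) (psi i j t + mu i j * Jint (psi i j) t)
                   = w i t - y i t - theta i * Jint (y i) t),
        (forall j, \sum_(i < nI) psi i j t = - z j t),
        (forall i, 0 <= y i t) /\ (forall j, 0 <= z j t)
      & Num.min (\sum_(i < nI) y i t) (\sum_(j < nJ) z j t) = 0].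

(* A tree of diameter 3 is a double star: some i0 is adjacent to every j and
   some j0 to every i.  Let F_i = f_i + r_i be the new input (r vanishes off
   i0, see below) and m = min (sum F, sum z).  The same fraction m / sum F of
   every F_i is matched with the fraction m / sum z of every z_j: input at a
   leaf i <> i0 travels along i - j0 - i0 - j, which changes psi by dpsi with a
   negative entry on the edge (i0, j0); the unmatched rest is added to y.
   Complementarity survives since either all the input or all the idle
   capacity z is used up, and (S1) then forces
   eta_i = r_i + J (sum_j mu_ij dpsi_ij + theta_i dy_i).
   This integrand is nonnegative except at i0, where the return flow on
   (i0, j0) costs at most mu_i0j0 S, with S = sum_i |f_i|^*_T.  The ramp
   r_i0 t = mu_i0j0 S min(t, tau), tau = 1 / min_j mu_i0j, pays for it up to
   time tau; afterwards the ramp alone makes the input so large that the flow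
   out of i0 dominates the return flow.  Saturating the ramp keeps
   sum F <= S (1 + mu_i0j0 tau), which gives eta_i <= m5 T S. *)

From HB Require Import structures.
From mathcomp Require Import all_boot all_order all_algebra.
From mathcomp Require Import all_classical all_reals all_analysis.
From mathcomp Require Import ring lra measurable_realfun.
Set Implicit Arguments. Unset Strict Implicit. Unset Printing Implicit Defensive.
Import Order.TTheory GRing.Theory Num.Theory.
Import numFieldNormedType.Exports.
Local Open Scope classical_set_scope.
Local Open Scope ring_scope.

Section StarCenter.
Variables (A B : finType) (e : A -> B -> bool).
Hypotheses
  (common_nbr : forall a a', a != a' -> exists b, e a b && e a' b)
  (no_4cycle : forall a1 a2 b1 b2, a1 != a2 -> b1 != b2 ->
     e a1 b1 -> e a2 b1 -> e a2 b2 -> e a1 b2 -> False)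
  (no_6cycle : forall a1 a2 a3 b1 b2 b3,
     a1 != a2 -> a2 != a3 -> a1 != a3 -> b1 != b2 -> b2 != b3 -> b1 != b3 ->
     e a1 b1 -> e a2 b1 -> e a2 b2 -> e a3 b2 -> e a3 b3 -> e a1 b3 -> False).

Lemma star_center a1 b1 : e a1 b1 -> exists b0, forall a, e a b0.
Proof.
move=> e11; have [[a2 a21]|single] := pselect (exists a2, a2 != a1); last first.
  exists b1 => a; have [->//|a1a] := eqVneq a a1.
  by case: single; exists a.
have [b0 /andP[e20 e10]] := common_nbr a21.
exists b0 => a; have [->//|aa2] := eqVneq a a2; have [->//|aa1] := eqVneq a a1.
have [c1 /andP[ea1 e1c]] := common_nbr aa1.
have [c2 /andP[ea2 e2c]] := common_nbr aa2.
have [->//|c10] := eqVneq b0 c1; have [->//|c20] := eqVneq b0 c2.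
(* Otherwise a1 - b0 - a2 - c2 - a - c1 - a1 is a 4-cycle (if c1 = c2) or a 6-cycle. *)
have [c12|c12] := eqVneq c1 c2.
  by rewrite -c12 in e2c; case: (no_4cycle a21 c10 e20 e10 e1c e2c).
by case: (no_6cycle a21 _ _ c10 c12 c20 e20 e10 e1c ea1 ea2 e2c); rewrite eq_sym.
Qed.

End StarCenter.

Section DoubleStar.
Variables (nI nJ : nat) (E : {set 'I_nI * 'I_nJ}).

Definition side (u : vert nI nJ) : bool := if u is inl _ then true else false.

Lemma adj_side u v : adj E u v -> side v = ~~ side u.
Proof. by case: u => ?; case: v. Qed.

Lemma dist3_same_side_nbr u v : dist_le E u v 3 -> u != v -> side u = side v ->
  exists x, adj E u x && adj E x v.
Proof.
move=> [p [pth <- lep]]; case: p pth lep => [|x [|y [|z [|? ?]]]] //=.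
- by rewrite eqxx.
- by rewrite andbT => /adj_side-> _ _; case: (side u).
- by rewrite andbT => /andP[ux xy]; exists x; rewrite ux xy.
- rewrite andbT => /and3P[/adj_side ux /adj_side xy /adj_side yz] _ _.
  by rewrite yz xy ux !negbK; case: (side u).
Qed.

Lemma common_nbrI (i i' : 'I_nI) : (forall u v, dist_le E u v 3) -> i != i' ->
  exists j, ((i, j) \in E) && ((i', j) \in E).
Proof.
move=> D3 ii'; have [|[x|j] //] := dist3_same_side_nbr (D3 (inl i) (inl i')) _ erefl.
  by apply: contra ii' => /eqP[->].
by exists j.
Qed.

Lemma common_nbrJ (j j' : 'I_nJ) : (forall u v, dist_le E u v 3) -> j != j' ->
  exists i, ((i, j) \in E) && ((i, j') \in E).
Proof.
move=> D3 jj'; have [|[i|x] //] := dist3_same_side_nbr (D3 (inr j) (inr j')) _ erefl.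
  by apply: contra jj' => /eqP[->].
by exists i.
Qed.

Lemma acyclic_no_4cycle (i1 i2 : 'I_nI) (j1 j2 : 'I_nJ) : acyclic_graph E ->
  i1 != i2 -> j1 != j2 ->
  (i1, j1) \in E -> (i2, j1) \in E -> (i2, j2) \in E -> (i1, j2) \in E -> False.
Proof.
move=> acyc i12 j12 e11 e21 e22 e12.
have := acyc [:: inl i1; inr j1; inl i2; inr j2].
by rewrite /= !inE -!sum_eqE /= (negbTE i12) (negbTE j12) e11 e21 e22 e12 => /(_ isT isT).
Qed.

Lemma acyclic_no_6cycle (i1 i2 i3 : 'I_nI) (j1 j2 j3 : 'I_nJ) : acyclic_graph E ->
  i1 != i2 -> i2 != i3 -> i1 != i3 -> j1 != j2 -> j2 != j3 -> j1 != j3 ->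
  (i1, j1) \in E -> (i2, j1) \in E -> (i2, j2) \in E -> (i3, j2) \in E ->
  (i3, j3) \in E -> (i1, j3) \in E -> False.
Proof.
move=> acyc i12 i23 i13 j12 j23 j13 e11 e21 e22 e32 e33 e13.
have := acyc [:: inl i1; inr j1; inl i2; inr j2; inl i3; inr j3].
rewrite /= !inE -!sum_eqE /= (negbTE i12) (negbTE i23) (negbTE i13).
by rewrite (negbTE j12) (negbTE j23) (negbTE j13) e11 e21 e22 e32 e33 e13 => /(_ isT isT).
Qed.

Lemma diameter3_edge : diameter_eq E 3 -> exists i j, (i, j) \in E.
Proof.
move=> [D3 [u [v far]]]; have [[|x p] [/= up uv _]] := D3 u v.
  by case: (far 0%N) => //; exists [::].
by case: u up {far uv} => [i|j]; case: x => [i'|j'] //= /andP[e _]; do 2 eexists; exact: e.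
Qed.

Lemma tree_diameter3_double_star : is_tree E -> diameter_eq E 3 ->
  (exists i0, forall j, (i0, j) \in E) /\ (exists j0, forall i, (i, j0) \in E).
Proof.
move=> [_ acyc] diam; have [i1 [j1 e11]] := diameter3_edge diam.
have D3 := diam.1; split.
- apply: (@star_center _ _ (fun j i => (i, j) \in E) _ _ _ j1 i1 e11).
  + by move=> j j' /(common_nbrJ D3).
  + move=> a1 a2 b1 b2 a12 b12 e11' e21 e22 e12'.
    exact: (acyclic_no_4cycle acyc b12 a12 e11' e12' e22 e21).
  + move=> a1 a2 a3 b1 b2 b3 a12 a23 a13 b12 b23 b13 e11' e21 e22 e32 e33 e13'.
    apply: (acyclic_no_6cycle acyc b12 b23 b13 a23 _ _ e21 e22 e32 e33 e13' e11');
      by rewrite eq_sym.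
- apply: (@star_center _ _ (fun i j => (i, j) \in E) _ _ _ i1 j1 e11).
  + by move=> i i' /(common_nbrI D3).
  + by move=> ? ? ? ? ? ?; exact: acyclic_no_4cycle.
  + by move=> ? ? ? ? ? ? ? ? ? ? ? ?; exact: acyclic_no_6cycle.
Qed.

End DoubleStar.

Section RegularFunctions.
Context {R : realType} (T : R).
Implicit Types (h : R -> R).

Lemma regular_on_cst (c : R) : regular_on T (fun=> c).
Proof. by split => //; exists `|c|. Qed.

Lemma regular_on_id : regular_on T id.
Proof.
split => //; exists `|T| => t; rewrite in_itv /= => /andP[t0 tT].
by rewrite ger0_norm // (le_trans tT (ler_norm T)).
Qed.

Lemma regular_onD h1 h2 : regular_on T h1 -> regular_on T h2 ->
  regular_on T (fun u => h1 u + h2 u).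
Proof.
move=> [m1 [M1 b1]] [m2 [M2 b2]]; split; first exact: measurable_funD.
by exists (M1 + M2) => u uT; rewrite (le_trans (ler_normD _ _)) ?lerD ?b1 ?b2.
Qed.

Lemma regular_onB h1 h2 : regular_on T h1 -> regular_on T h2 ->
  regular_on T (fun u => h1 u - h2 u).
Proof.
move=> [m1 [M1 b1]] [m2 [M2 b2]]; split; first exact: measurable_funB.
by exists (M1 + M2) => u uT; rewrite (le_trans (ler_normB _ _)) ?lerD ?b1 ?b2.
Qed.

Lemma regular_onM h1 h2 : regular_on T h1 -> regular_on T h2 ->
  regular_on T (fun u => h1 u * h2 u).
Proof.
move=> [m1 [M1 b1]] [m2 [M2 b2]]; split; first exact: measurable_funM.
by exists (M1 * M2) => u uT; rewrite normrM ler_pM ?b1 ?b2.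
Qed.

Lemma regular_on_min h1 h2 : regular_on T h1 -> regular_on T h2 ->
  regular_on T (fun u => Num.min (h1 u) (h2 u)).
Proof.
move=> [m1 [M1 b1]] [m2 [M2 b2]]; split; first exact: measurable_minr.
exists (M1 + M2) => u uT; have := b1 u uT; have := b2 u uT.
have := normr_ge0 (h1 u); have := normr_ge0 (h2 u).
by case: (leP (h1 u) (h2 u)) => _; lra.
Qed.

Lemma regular_on_sum (I : Type) (r : seq I) (h : I -> R -> R) :
  (forall i, regular_on T (h i)) -> regular_on T (fun u => \sum_(i <- r) h i u).
Proof.
move=> rh; elim: r => [|a r IH].
  by under eq_fun do rewrite big_nil; exact: regular_on_cst.
by under eq_fun do rewrite big_cons; exact: regular_onD.
Qed.

Lemma measurable_inv : measurable_fun [set: R] GRing.inv.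
Proof.
have -> : GRing.inv = (fun x : R => if x == 0 then 0 else x^-1).
  by apply/funext => x; case: eqP => // ->; rewrite invr0.
apply: measurable_fun_if => //; first exact: measurable_fun_eqr.
have -> : [set: R] `&` (fun x : R => x == 0) @^-1` [set false] = ~` [set 0].
  by apply/seteqP; split => x /=; [case=> _ /eqP|move=> /eqP/negbTE ->].
apply: open_continuous_measurable_fun.
  exact/closed_openC/accessible_closed_set1/hausdorff_accessible/Rhausdorff.
by move=> x; rewrite inE /= => /eqP x0; exact: inv_continuous.
Qed.

Lemma regular_on_div h1 h2 M : regular_on T h1 -> regular_on T h2 ->
  (forall t, t \in `[0, T] -> `|h1 t / h2 t| <= M) ->
  regular_on T (fun t => h1 t / h2 t).
Proof.
move=> [m1 _] [m2 _] bd; split; last by exists M.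
by apply: measurable_funM => //; exact: measurableT_comp measurable_inv m2.
Qed.

Lemma norm_le_supnormT h t : regular_on T h -> t \in `[0, T] -> `|h t| <= supnormT T h.
Proof.
move=> [_ [M b]] tT; apply: ub_le_sup; last by exists t.
by exists M => _ [s sT <-]; apply: b.
Qed.

End RegularFunctions.

Section Jint.
Context {R : realType} (T : R).
Notation mu := (@lebesgue_measure R).
Implicit Types (h : R -> R) (s t : R).

Lemma subset_itv0 t : t \in `[0, T] -> `[0, t] `<=` `[0, T].
Proof.
rewrite in_itv /= => /andP[_ tT] x /=; rewrite !in_itv /= => /andP[-> xt].
exact: le_trans tT.
Qed.

Lemma integrable_regular_on h t : regular_on T h -> t \in `[0, T] ->
  mu.-integrable `[0, t] (EFin \o h).
Proof.
move=> [mh [M hM]] tT; apply: measurable_bounded_integrable => //.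
- by rewrite /= lebesgue_measure_itv; case: ifP => _; rewrite ?ltry.
- exact: measurable_funS (subset_itv0 tT) mh.
- exists M; split; first exact: num_real.
  by move=> N MN x /= xt; rewrite (le_trans _ (ltW MN)) // hM // (subset_itv0 tT).
Qed.

Lemma Jint0 h : Jint h 0 = 0.
Proof. by rewrite /Jint set_itv1 Rintegral_set1. Qed.

Lemma JintD h1 h2 t : regular_on T h1 -> regular_on T h2 -> t \in `[0, T] ->
  Jint (fun u => h1 u + h2 u) t = Jint h1 t + Jint h2 t.
Proof. by move=> r1 r2 tT; rewrite /Jint RintegralD //; exact: integrable_regular_on tT. Qed.

Lemma JintZ c h t : regular_on T h -> t \in `[0, T] ->
  Jint (fun u => c * h u) t = c * Jint h t.
Proof. by move=> rh tT; rewrite /Jint RintegralZl //; exact: integrable_regular_on tT. Qed.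

Lemma Jint_sum (I : Type) (r : seq I) (c : I -> R) (h : I -> R -> R) t :
  (forall i, regular_on T (h i)) -> t \in `[0, T] ->
  Jint (fun u => \sum_(i <- r) c i * h i u) t = \sum_(i <- r) c i * Jint (h i) t.
Proof.
move=> rh tT; have rch i : regular_on T (fun u => c i * h i u).
  exact: regular_onM (regular_on_cst _ _) (rh i).
elim: r => [|a r IH].
  by under eq_fun do rewrite big_nil; rewrite big_nil /Jint Rintegral_cst ?mul0r.
under eq_fun do rewrite big_cons.
by rewrite JintD ?JintZ ?big_cons ?IH //; exact: regular_on_sum.
Qed.

Lemma JintB h s t : regular_on T h -> 0 <= s -> s <= t -> t <= T ->
  Jint h t - Jint h s = \int[mu]_(u in `]s, t]) h u.
Proof.
move=> rh s0 st tT; rewrite /Jint (@Rintegral_itvB R h (BLeft 0) (BRight t) s) //.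
by apply: integrable_regular_on rh _; rewrite in_itv /= (le_trans s0 st).
Qed.

Lemma Rintegral_cst_itv_oc (c : R) s t : s <= t -> \int[mu]_(u in `]s, t]) c = c * (t - s).
Proof.
move=> st; rewrite Rintegral_cst //= lebesgue_measure_itv /= lte_fin.
case: ltP => [//|ts]; suff -> : t = s by rewrite subrr mulr0.
by apply/eqP; rewrite eq_le st ts.
Qed.

Lemma integrable_cst_itv_oc (c : R) s t : mu.-integrable `]s, t] (EFin \o fun=> c).
Proof.
apply: measurable_bounded_integrable => //.
- by rewrite /= lebesgue_measure_itv; case: ifP => _; rewrite ?ltry.
- by exists `|c|; split; [exact: num_real|move=> N cN x _; rewrite ltW].
Qed.

Lemma integrable_regular_on_itv_oc h s t : regular_on T h -> 0 <= s -> t <= T ->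
  mu.-integrable `]s, t] (EFin \o h).
Proof.
move=> rh s0 tT; have [st|ts] := leP s t; last first.
  by rewrite set_itv_ge ?bnd_simp -?leNgt ?ltW //; exact: integrable_set0.
apply: integrableS (integrable_regular_on (t := t) rh _) => //.
- by move=> u /=; rewrite !in_itv /= => /andP[su ->]; rewrite (le_trans s0 (ltW su)).
- by rewrite in_itv /= tT (le_trans s0 st).
Qed.

Lemma Jint_incr_ge h c s t : regular_on T h -> 0 <= s -> s <= t -> t <= T ->
  (forall u, s < u -> u <= t -> c <= h u) -> c * (t - s) <= Jint h t - Jint h s.
Proof.
move=> rh s0 st tT hc; rewrite JintB // -Rintegral_cst_itv_oc //.
apply: le_Rintegral => //; [exact: integrable_cst_itv_oc|exact: integrable_regular_on_itv_oc|].
by move=> u; rewrite /= in_itv /= => /andP[su ut]; exact: hc.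
Qed.

Lemma Jint_incr_le h c s t : regular_on T h -> 0 <= s -> s <= t -> t <= T ->
  (forall u, s < u -> u <= t -> h u <= c) -> Jint h t - Jint h s <= c * (t - s).
Proof.
move=> rh s0 st tT hc; rewrite JintB // -Rintegral_cst_itv_oc //.
apply: le_Rintegral => //; [exact: integrable_regular_on_itv_oc|exact: integrable_cst_itv_oc|].
by move=> u; rewrite /= in_itv /= => /andP[su ut]; exact: hc.
Qed.

Lemma continuous_Jint h : regular_on T h -> 0 <= T -> {within `[0, T], continuous (Jint h)}.
Proof.
move=> rh T0; apply: parameterized_integral_continuous => //.
by apply: integrable_regular_on rh _; rewrite in_itv /= T0 lexx.
Qed.

Lemma regular_on_Jint h : 0 <= T -> regular_on T h -> regular_on T (Jint h).
Proof.
move=> T0 rh; split.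
  by apply: subspace_continuous_measurable_fun => //; exact: continuous_Jint.
have [_ [M hM]] := rh; exists (M * T) => t; rewrite in_itv /= => /andP[t0 tT].
have M0 : 0 <= M by rewrite (le_trans _ (hM 0 _)) // in_itv /= lexx T0.
have hMt u : 0 < u -> u <= t -> - M <= h u <= M.
  by move=> u0 ut; rewrite -ler_norml hM // in_itv /= ltW // (le_trans ut).
have := Jint_incr_le rh (lexx 0) t0 tT (fun u u0 ut => proj2 (andP (hMt u u0 ut))).
have := Jint_incr_ge rh (lexx 0) t0 tT (fun u u0 ut => proj1 (andP (hMt u u0 ut))).
rewrite Jint0 !subr0 ler_norml => lo hi.
have : M * t <= M * T by rewrite ler_wpM2l.
by lra.
Qed.

Lemma ramp_Jint_homo h (c tau : R) : regular_on T h -> 0 <= c -> 0 <= tau ->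
  (forall u, u \in `[0, T] -> - c <= h u) ->
  (forall u, u \in `[0, T] -> tau <= u -> 0 <= h u) ->
  {in `[0, T] &, {homo (fun t => c * Num.min t tau + Jint h t) : s t / s <= t}}.
Proof.
move=> rh c0 tau0 h_ge h_sat.
have inT u v w : 0 <= u -> u < v -> v <= w -> w <= T -> v \in `[0, T].
  by move=> u0 uv vw wT; rewrite in_itv /= (le_trans u0 (ltW uv)) (le_trans vw wT).
have early s t : 0 <= s -> s <= t -> t <= tau -> t <= T ->
    c * Num.min s tau + Jint h s <= c * Num.min t tau + Jint h t.
  move=> s0 st ttau tT; rewrite !min_l ?(le_trans st) //.
  have := Jint_incr_ge rh s0 st tT (fun u su ut => h_ge u (inT _ _ _ s0 su ut tT)).
  by nra.
have late s t : tau <= s -> s <= t -> t <= T ->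
    c * Num.min s tau + Jint h s <= c * Num.min t tau + Jint h t.
  move=> taus st tT; rewrite !min_r ?(le_trans taus) // lerD2l -subr_ge0.
  have s0 := le_trans tau0 taus.
  have := Jint_incr_ge (c := 0) rh s0 st tT.
  rewrite mul0r; apply=> u su ut; apply: (h_sat _ (inT _ _ _ s0 su ut tT)).
  exact: le_trans taus (ltW su).
move=> s t; rewrite !in_itv /= => /andP[s0 _] /andP[_ tT] st.
have [ttau|] := boolP (t <= tau); first exact: early.
rewrite -ltNge => /ltW taut; have [taus|] := boolP (tau <= s); first exact: late.
rewrite -ltNge => /ltW stau.
apply: (le_trans (early s tau _ _ _ _)) (late tau t _ _ _) => //.
exact: le_trans taut tT.
Qed.

End Jint.

Section Ratios.
Context {R : realFieldType}.

Lemma divr_itv01 (x y : R) : 0 <= x -> x <= y ->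
  [/\ 0 <= x / y, x / y <= 1 & x / y * y = x].
Proof.
move=> x0 xy; have [y0|y0] := eqVneq y 0.
  have -> : x = 0 by apply/eqP; rewrite eq_le x0 -y0 xy.
  by rewrite !mul0r.
have yp : 0 < y by rewrite lt_neqAle eq_sym y0 (le_trans x0 xy).
by rewrite divr_ge0 ?ler_pdivrMr ?mul1r ?divfK // ltW.
Qed.

Lemma min_eq0_matched (Y Z F : R) : 0 <= Y -> 0 <= Z -> 0 <= F -> Num.min Y Z = 0 ->
  Num.min (Y + (F - Num.min F Z)) (Z - Num.min F Z) = 0.
Proof.
move=> Y0 Z0 F0; case: (leP Y Z) => YZ Yeq; case: (leP F Z) => FZ; rewrite ?subrr ?addr0.
all: by case: leP => ?; lra.
Qed.

End Ratios.

Section Construction.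
Context {R : realType} (nI nJ : nat) (E : {set 'I_nI * 'I_nJ})
  (mu : 'I_nI -> 'I_nJ -> R) (theta : 'I_nI -> R).
Hypotheses (mu_gt0 : forall i j, (i, j) \in E -> 0 < mu i j)
  (mu_out : forall i j, (i, j) \notin E -> mu i j = 0)
  (theta_ge0 : forall i, 0 <= theta i).
Variables (i0 : 'I_nI) (j0 : 'I_nJ).
Hypotheses (i0_hub : forall j, (i0, j) \in E) (j0_hub : forall i, (i, j0) \in E).

Lemma mu_ge0 i j : 0 <= mu i j.
Proof. by case: (boolP ((i, j) \in E)) => [/mu_gt0/ltW|/mu_out->]. Qed.

(* Only [0 < mu_min <= mu i0 j] matters, so the seed 1 of the minimum is harmless. *)
Definition mu_min := \big[Num.min/1]_j mu i0 j.
Definition tau := mu_min^-1.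
Definition C_deta := (\sum_i \sum_j mu i j + \sum_i theta i) * (1 + mu i0 j0 * tau).
Definition m5 := mu i0 j0 + C_deta.

Lemma mu_min_gt0 : 0 < mu_min.
Proof. by apply: lt_bigmin => // j _; exact: mu_gt0. Qed.

Lemma tau_gt0 : 0 < tau.
Proof. by rewrite invr_gt0 mu_min_gt0. Qed.

Lemma mu_min_tau : mu_min * tau = 1.
Proof. by rewrite mulfV // gt_eqF // mu_min_gt0. Qed.

Lemma C_deta_ge0 : 0 <= C_deta.
Proof.
rewrite mulr_ge0 ?addr_ge0 ?mulr_ge0 ?mu_ge0 ?(ltW tau_gt0) ?sumr_ge0 // => i _.
by apply: sumr_ge0 => j _; exact: mu_ge0.
Qed.

Variables (T : R) (psi : 'I_nI -> 'I_nJ -> R -> R) (y : 'I_nI -> R -> R)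
  (z : 'I_nJ -> R -> R) (w : 'I_nI -> R -> R) (f : 'I_nI -> R -> R).
Hypotheses (T_gt0 : 0 < T)
  (psi_reg : forall i j, regular_on T (psi i j)) (y_reg : forall i, regular_on T (y i))
  (z_reg : forall j, regular_on T (z j)) (w_reg : forall i, regular_on T (w i))
  (sys : system_S E mu theta T psi y z w)
  (f_reg : forall i, regular_on T (f i)) (f_ge0 : forall i t, t \in `[0, T] -> 0 <= f i t).

Definition Sf := \sum_i supnormT T (f i).
Definition ramp_rate i := if i == i0 then mu i0 j0 * Sf else 0.
Definition ramp i t := ramp_rate i * Num.min t tau.
Definition F i t := f i t + ramp i t.
Definition Ftot t := \sum_i F i t.
Definition Ztot t := \sum_j z j t.
Definition matched t := Num.min (Ftot t) (Ztot t).
Definition lamF t := matched t / Ftot t.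
Definition lamZ t := matched t / Ztot t.
Definition dpsi i j t :=
  if i == i0 then lamZ t * z j t - (if j == j0 then lamF t * (Ftot t - F i0 t) else 0)
  else if j == j0 then lamF t * F i t else 0.
Definition dy i t := (1 - lamF t) * F i t.
Definition deta i t := \sum_j mu i j * dpsi i j t + theta i * dy i t.
Definition eta i t := ramp i t + Jint (deta i) t.

Lemma itv0T_bounds t : t \in `[0, T] -> 0 <= t /\ t <= T.
Proof. by rewrite in_itv /= => /andP. Qed.

Lemma f_le_sup i t : t \in `[0, T] -> f i t <= supnormT T (f i).
Proof. by move=> tT; rewrite (le_trans (ler_norm _)) // norm_le_supnormT. Qed.

Lemma Sf_ge0 : 0 <= Sf.
Proof.
have T0 : 0 \in `[0, T] by rewrite in_itv /= lexx ltW.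
by apply: sumr_ge0 => i _; rewrite (le_trans (f_ge0 i T0)) // f_le_sup.
Qed.

Lemma ramp_rate_ge0 i : 0 <= ramp_rate i.
Proof. by rewrite /ramp_rate; case: eqP => // _; rewrite mulr_ge0 ?mu_ge0 ?Sf_ge0. Qed.

Lemma ramp_ge0 i t : 0 <= t -> 0 <= ramp i t.
Proof. by move=> t0; rewrite mulr_ge0 ?ramp_rate_ge0 // le_min t0 ltW ?tau_gt0. Qed.

Lemma ramp_le_lin i t : ramp i t <= ramp_rate i * t.
Proof. by rewrite ler_wpM2l ?ramp_rate_ge0 // ge_min lexx. Qed.

Lemma ramp_rate_le i : ramp_rate i <= mu i0 j0 * Sf.
Proof. by rewrite /ramp_rate; case: eqP => // _; rewrite mulr_ge0 ?mu_ge0 ?Sf_ge0. Qed.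

Lemma ramp_le_sat i t : 0 <= t -> ramp i t <= mu i0 j0 * Sf * tau.
Proof.
move=> t0; rewrite ler_pM ?ramp_rate_ge0 ?ramp_rate_le ?ge_min ?lexx ?orbT //.
by rewrite le_min t0 ltW ?tau_gt0.
Qed.

Lemma F_out i t : i != i0 -> F i t = f i t.
Proof. by move=> /negbTE ne; rewrite /F /ramp /ramp_rate ne mul0r addr0. Qed.

Lemma F_ge0 i t : t \in `[0, T] -> 0 <= F i t.
Proof. by move=> tT; rewrite addr_ge0 ?f_ge0 ?ramp_ge0 //; case: (itv0T_bounds tT). Qed.

Lemma Ftot_ge0 t : t \in `[0, T] -> 0 <= Ftot t.
Proof. by move=> tT; apply: sumr_ge0 => i _; exact: F_ge0. Qed.

Lemma F_le_Ftot i t : t \in `[0, T] -> F i t <= Ftot t.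
Proof.
by move=> tT; rewrite /Ftot (bigD1 i) //= lerDl sumr_ge0 // => k _; exact: F_ge0.
Qed.

Lemma Ftot_sub_F_i0 t : Ftot t - F i0 t = \sum_(i | i != i0) F i t.
Proof. by rewrite /Ftot (bigD1 i0) //= addrAC subrr add0r. Qed.

Lemma Ftot_sub_F_i0_ge0 t : t \in `[0, T] -> 0 <= Ftot t - F i0 t.
Proof. by move=> tT; rewrite Ftot_sub_F_i0 sumr_ge0 // => i _; exact: F_ge0. Qed.

Lemma Ftot_sub_F_i0_le t : t \in `[0, T] -> Ftot t - F i0 t <= Sf.
Proof.
move=> tT; rewrite Ftot_sub_F_i0 /Sf [leRHS](bigID (fun i => i != i0)) /=.
under eq_bigr => i /F_out -> do [].
rewrite ler_wpDr ?ler_sum // => [|i _].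
  by apply: sumr_ge0 => i _; rewrite (le_trans (f_ge0 i tT)) ?f_le_sup.
exact: f_le_sup.
Qed.

Lemma Ftot_eq t : Ftot t = \sum_i f i t + ramp i0 t.
Proof.
rewrite /Ftot big_split /=; congr (_ + _); rewrite (bigD1 i0) //= big1 ?addr0 // => i ne.
by rewrite /ramp /ramp_rate (negbTE ne) mul0r.
Qed.

Lemma Ftot_le t : t \in `[0, T] -> Ftot t <= Sf * (1 + mu i0 j0 * tau).
Proof.
move=> tT; have [t0 _] := itv0T_bounds tT.
rewrite Ftot_eq mulrDr mulr1 mulrA [Sf * _]mulrC lerD ?ramp_le_sat //.
by apply: ler_sum => i _; exact: f_le_sup.
Qed.

Lemma Ftot_ge_sat t : t \in `[0, T] -> tau <= t -> mu i0 j0 * Sf * tau <= Ftot t.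
Proof.
move=> tT taut; rewrite Ftot_eq /ramp /ramp_rate eqxx (min_r taut) lerDr.
by apply: sumr_ge0 => i _; exact: f_ge0.
Qed.

Lemma z_ge0 j t : t \in `[0, T] -> 0 <= z j t.
Proof. by move=> tT; have [_ _ _ [_ ->]] := sys tT. Qed.

Lemma Ztot_ge0 t : t \in `[0, T] -> 0 <= Ztot t.
Proof. by move=> tT; apply: sumr_ge0 => j _; exact: z_ge0. Qed.

Lemma lamFP t : t \in `[0, T] ->
  [/\ 0 <= lamF t, lamF t <= 1 & lamF t * Ftot t = matched t].
Proof. by move=> tT; apply: divr_itv01; rewrite ?ge_min ?lexx // le_min Ftot_ge0 ?Ztot_ge0. Qed.

Lemma lamZP t : t \in `[0, T] ->
  [/\ 0 <= lamZ t, lamZ t <= 1 & lamZ t * Ztot t = matched t].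
Proof.
by move=> tT; apply: divr_itv01; rewrite ?ge_min ?lexx ?orbT // le_min Ftot_ge0 ?Ztot_ge0.
Qed.

Lemma dpsi_out i j t : (i, j) \notin E -> dpsi i j t = 0.
Proof.
rewrite /dpsi; case: eqP => [->|_]; first by rewrite i0_hub.
by case: eqP => [->|//]; rewrite j0_hub.
Qed.

Lemma dpsi_row i t : t \in `[0, T] -> \sum_j dpsi i j t = lamF t * F i t.
Proof.
move=> tT; have [_ _ lamF_F] := lamFP tT; have [_ _ lamZ_Z] := lamZP tT.
rewrite /dpsi; case: eqP => [->|_]; last first.
  by rewrite -big_mkcond big_pred1_eq.
rewrite sumrB -big_mkcond big_pred1_eq -mulr_sumr -/(Ztot t) lamZ_Z -lamF_F.
by rewrite mulrBr opprB addrC subrK.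
Qed.

Lemma dpsi_col j t : \sum_i dpsi i j t = lamZ t * z j t.
Proof.
rewrite (bigD1 i0) //= {1}/dpsi eqxx.
under eq_bigr => i /negbTE ne do rewrite /dpsi ne.
case: eqP => _; last by rewrite big1 ?subr0 ?addr0.
by rewrite -mulr_sumr Ftot_sub_F_i0 subrK.
Qed.

Lemma z_le_Ztot j t : t \in `[0, T] -> z j t <= Ztot t.
Proof.
by move=> tT; rewrite /Ztot (bigD1 j) //= lerDl sumr_ge0 // => k _; exact: z_ge0.
Qed.

Lemma dpsi_ge0 i j t : i != i0 -> t \in `[0, T] -> 0 <= dpsi i j t.
Proof.
move=> /negbTE ne tT; have [lamF0 _ _] := lamFP tT.
by rewrite /dpsi ne; case: eqP => // _; rewrite mulr_ge0 ?F_ge0.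
Qed.

Lemma dpsi_le i j t : t \in `[0, T] -> dpsi i j t <= Ftot t.
Proof.
move=> tT; have [lamF0 lamF1 _] := lamFP tT; have [lamZ0 _ lamZ_Z] := lamZP tT.
have lamZ_z_le k : lamZ t * z k t <= Ftot t.
  have matched_le : matched t <= Ftot t by rewrite ge_min lexx.
  by rewrite (le_trans _ matched_le) // -lamZ_Z ler_wpM2l ?z_le_Ztot.
rewrite /dpsi; case: eqP => _.
  rewrite (le_trans _ (lamZ_z_le j)) // gerBl; case: eqP => // _.
  by rewrite mulr_ge0 ?Ftot_sub_F_i0_ge0.
case: eqP => _; last exact: Ftot_ge0.
by rewrite (le_trans _ (F_le_Ftot i tT)) // ler_piMl ?F_ge0.
Qed.

Lemma dy_ge0 i t : t \in `[0, T] -> 0 <= dy i t.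
Proof. by move=> tT; have [_ lamF1 _] := lamFP tT; rewrite mulr_ge0 ?subr_ge0 ?F_ge0. Qed.

Lemma dy_le i t : t \in `[0, T] -> dy i t <= Ftot t.
Proof.
move=> tT; have [lamF0 _ _] := lamFP tT.
by rewrite (le_trans _ (F_le_Ftot i tT)) // ler_piMl ?F_ge0 // gerBl.
Qed.

Lemma deta_le i t : t \in `[0, T] -> deta i t <= C_deta * Sf.
Proof.
move=> tT; have mu_row_ge0 : 0 <= \sum_j mu i j by apply: sumr_ge0 => j _; exact: mu_ge0.
have le_row : deta i t <= (\sum_j mu i j + theta i) * Ftot t.
  rewrite mulrDl mulr_suml; apply: lerD; last by rewrite ler_wpM2l ?dy_le.
  by apply: ler_sum => j _; rewrite ler_wpM2l ?mu_ge0 ?dpsi_le.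
have coef_le : \sum_j mu i j + theta i <= \sum_i \sum_j mu i j + \sum_i theta i.
  apply: lerD; rewrite [leRHS](bigD1 i) //= lerDl sumr_ge0 // => k _.
  by apply: sumr_ge0 => j _; exact: mu_ge0.
apply: (le_trans le_row); rewrite /C_deta -mulrA [_ * Sf]mulrC.
by rewrite ler_pM ?addr_ge0 ?Ftot_ge0 ?Ftot_le.
Qed.

Lemma deta_i0 t : deta i0 t = \sum_j mu i0 j * (lamZ t * z j t)
  - mu i0 j0 * (lamF t * (Ftot t - F i0 t)) + theta i0 * dy i0 t.
Proof.
rewrite /deta /dpsi eqxx; congr (_ + _).
under eq_bigr do rewrite mulrBr; rewrite sumrB; congr (_ - _).
by rewrite (bigD1 j0) //= eqxx big1 ?addr0 // => j /negbTE ->; rewrite mulr0.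
Qed.

Lemma deta_ge0_out i t : i != i0 -> t \in `[0, T] -> 0 <= deta i t.
Proof.
move=> ne tT; rewrite addr_ge0 //; last by rewrite mulr_ge0 // dy_ge0.
by apply: sumr_ge0 => j _; rewrite mulr_ge0 ?mu_ge0 ?dpsi_ge0.
Qed.

Lemma inflow_i0_ge0 t : t \in `[0, T] -> 0 <= \sum_j mu i0 j * (lamZ t * z j t).
Proof.
move=> tT; have [lamZ0 _ _] := lamZP tT.
by apply: sumr_ge0 => j _; rewrite mulr_ge0 ?mu_ge0 // mulr_ge0 ?z_ge0.
Qed.

Lemma backflow_i0_le t : t \in `[0, T] -> lamF t * (Ftot t - F i0 t) <= lamF t * Sf.
Proof. by move=> tT; have [lamF0 _ _] := lamFP tT; rewrite ler_wpM2l ?Ftot_sub_F_i0_le. Qed.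

Lemma deta_i0_ge t : t \in `[0, T] -> - (mu i0 j0 * Sf) <= deta i0 t.
Proof.
move=> tT; have [lamF0 lamF1 _] := lamFP tT.
have := inflow_i0_ge0 tT; have := backflow_i0_le tT.
have : 0 <= theta i0 * dy i0 t by rewrite mulr_ge0 ?dy_ge0.
have : lamF t * Sf <= Sf by rewrite ler_piMl ?Sf_ge0.
have := mu_ge0 i0 j0; rewrite deta_i0; nra.
Qed.

Lemma deta_i0_sat_ge0 t : t \in `[0, T] -> tau <= t -> 0 <= deta i0 t.
Proof.
move=> tT taut; have [lamF0 _ lamF_F] := lamFP tT; have [lamZ0 _ lamZ_Z] := lamZP tT.
have inflow_ge : mu_min * (lamF t * Ftot t) <= \sum_j mu i0 j * (lamZ t * z j t).
  rewrite lamF_F -lamZ_Z mulr_sumr mulr_sumr; apply: ler_sum => j _.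
  by rewrite ler_wpM2r ?(mulr_ge0 lamZ0 (z_ge0 j tT)) //; exact: bigmin_le.
have sat : mu i0 j0 * Sf <= mu_min * Ftot t.
  have := ler_wpM2l (ltW mu_min_gt0) (Ftot_ge_sat tT taut).
  by rewrite mulrCA mu_min_tau mulr1.
have := backflow_i0_le tT; have : 0 <= theta i0 * dy i0 t by rewrite mulr_ge0 ?dy_ge0.
have := mu_ge0 i0 j0; rewrite deta_i0; nra.
Qed.

Lemma regular_on_ramp i : regular_on T (ramp i).
Proof.
exact: regular_onM (regular_on_cst _ _) (regular_on_min (regular_on_id T) (regular_on_cst _ _)).
Qed.

Lemma regular_on_F i : regular_on T (F i).
Proof. exact: regular_onD (f_reg i) (regular_on_ramp i). Qed.

Lemma regular_on_Ftot : regular_on T Ftot.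
Proof. exact: regular_on_sum regular_on_F. Qed.

Lemma regular_on_Ztot : regular_on T Ztot.
Proof. exact: regular_on_sum z_reg. Qed.

Lemma regular_on_matched : regular_on T matched.
Proof. exact: regular_on_min regular_on_Ftot regular_on_Ztot. Qed.

Lemma regular_on_lamF : regular_on T lamF.
Proof.
apply: (regular_on_div (M := 1) regular_on_matched regular_on_Ftot) => t tT.
by have [lamF0 lamF1 _] := lamFP tT; rewrite ger0_norm.
Qed.

Lemma regular_on_lamZ : regular_on T lamZ.
Proof.
apply: (regular_on_div (M := 1) regular_on_matched regular_on_Ztot) => t tT.
by have [lamZ0 lamZ1 _] := lamZP tT; rewrite ger0_norm.
Qed.

Lemma regular_on_dpsi i j : regular_on T (dpsi i j).
Proof.
rewrite /dpsi; case: (i == i0); case: (j == j0).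
- exact: regular_onB (regular_onM regular_on_lamZ (z_reg j))
    (regular_onM regular_on_lamF (regular_onB regular_on_Ftot (regular_on_F i0))).
- exact: regular_onB (regular_onM regular_on_lamZ (z_reg j)) (regular_on_cst _ _).
- exact: regular_onM regular_on_lamF (regular_on_F i).
- exact: regular_on_cst.
Qed.

Lemma regular_on_dy i : regular_on T (dy i).
Proof. exact: regular_onM (regular_onB (regular_on_cst _ _) regular_on_lamF) (regular_on_F i). Qed.

Lemma regular_on_deta i : regular_on T (deta i).
Proof.
apply: regular_onD (regular_onM (regular_on_cst _ _) (regular_on_dy i)).
by apply: regular_on_sum => j; exact: regular_onM (regular_on_cst _ _) (regular_on_dpsi i j).
Qed.

Lemma regular_on_eta i : regular_on T (eta i).
Proof.
exact: regular_onD (regular_on_ramp i) (regular_on_Jint (ltW T_gt0) (regular_on_deta i)).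
Qed.

Lemma eta_homo i : {in `[0, T] &, {homo eta i : s t / s <= t}}.
Proof.
apply: (ramp_Jint_homo (regular_on_deta i) (ramp_rate_ge0 i) (ltW tau_gt0)) => u uT.
  rewrite /ramp_rate; case: eqP => [->|/eqP ne]; first exact: deta_i0_ge.
  by rewrite oppr0; exact: deta_ge0_out.
by have [->|ne] := eqVneq i i0; [exact: deta_i0_sat_ge0|rewrite deta_ge0_out].
Qed.

Lemma eta0 i : eta i 0 = 0.
Proof. by rewrite /eta /ramp Jint0 min_l ?mulr0 ?addr0 // ltW // tau_gt0. Qed.

Lemma eta_ge0 i t : t \in `[0, T] -> 0 <= eta i t.
Proof.
move=> tT; rewrite -(eta0 i); apply: eta_homo => //; last by case: (itv0T_bounds tT).
by rewrite in_itv /= lexx ltW.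
Qed.

Lemma eta_le i t : t \in `[0, T] -> eta i t <= m5 * T * Sf.
Proof.
move=> tT; have [t0 tT'] := itv0T_bounds tT.
have deta_bound u : 0 < u -> u <= t -> deta i u <= C_deta * Sf.
  by move=> u0 ut; apply: deta_le; rewrite in_itv /= ltW // (le_trans ut).
have := Jint_incr_le (regular_on_deta i) (lexx 0) t0 tT' deta_bound.
rewrite Jint0 !subr0 => Jint_le.
have ramp_le : ramp i t <= mu i0 j0 * Sf * T.
  by rewrite (le_trans (ramp_le_lin i t)) // ler_pM ?ramp_rate_ge0 ?ramp_rate_le.
have CT : C_deta * Sf * t <= C_deta * Sf * T.
  by rewrite ler_wpM2l ?(mulr_ge0 C_deta_ge0 Sf_ge0).
have -> : m5 * T * Sf = mu i0 j0 * Sf * T + C_deta * Sf * T by rewrite /m5; ring.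
rewrite /eta; lra.
Qed.

Lemma continuous_eta i : {within `[0, T], continuous (eta i)}.
Proof.
have ramp_cont : continuous (ramp i).
  move=> x; apply: (@continuousM _ _ (fun=> ramp_rate i) (fun t => Num.min t tau)).
    exact: cst_continuous.
  by apply: (@continuous_min _ _ id (fun=> tau)) => //; exact: cst_continuous.
move=> x; apply: continuousD; last exact: continuous_Jint (regular_on_deta i) (ltW T_gt0) x.
exact: continuous_subspaceT.
Qed.

Lemma Jint_deta i t : t \in `[0, T] ->
  Jint (deta i) t = \sum_j mu i j * Jint (dpsi i j) t + theta i * Jint (dy i) t.
Proof.
move=> tT; have mu_dpsi_reg : regular_on T (fun u => \sum_j mu i j * dpsi i j u).
  by apply: regular_on_sum => j; exact: regular_onM (regular_on_cst _ _) (regular_on_dpsi i j).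
have theta_dy_reg : regular_on T (fun u => theta i * dy i u).
  exact: regular_onM (regular_on_cst _ _) (regular_on_dy i).
rewrite (JintD mu_dpsi_reg theta_dy_reg tT) (Jint_sum _ _ (regular_on_dpsi i) tT).
by rewrite (JintZ _ (regular_on_dy i) tT).
Qed.

Lemma sum_y_dy t : t \in `[0, T] ->
  \sum_i (y i t + dy i t) = \sum_i y i t + (Ftot t - matched t).
Proof.
move=> tT; have [_ _ lamF_F] := lamFP tT.
by rewrite big_split /= -mulr_sumr -/(Ftot t) mulrBl mul1r lamF_F.
Qed.

Lemma sum_zh t : t \in `[0, T] -> \sum_j (1 - lamZ t) * z j t = Ztot t - matched t.
Proof.
by move=> tT; have [_ _ lamZ_Z] := lamZP tT; rewrite -mulr_sumr mulrBl mul1r lamZ_Z.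
Qed.

Lemma system_S_hat : system_S E mu theta T (fun i j t => psi i j t + dpsi i j t)
  (fun i t => y i t + dy i t) (fun j t => (1 - lamZ t) * z j t)
  (fun i t => w i t + f i t + eta i t).
Proof.
move=> t tT; have [psi_out S1 S2 [y_nneg z_nneg] S4] := sys tT.
have [lamF0 lamF1 _] := lamFP tT; have [lamZ0 lamZ1 _] := lamZP tT.
split.
- by move=> i j nE; rewrite psi_out ?dpsi_out ?addr0.
- move=> i; rewrite (JintD (y_reg i) (regular_on_dy i) tT).
  under eq_bigr do rewrite (JintD (psi_reg _ _) (regular_on_dpsi _ _) tT).
  have -> : \sum_j (psi i j t + dpsi i j t + mu i j * (Jint (psi i j) t + Jint (dpsi i j) t))
      = \sum_j (psi i j t + mu i j * Jint (psi i j) t) + \sum_j dpsi i j t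
        + \sum_j mu i j * Jint (dpsi i j) t.
    by rewrite -!big_split /=; apply: eq_bigr => j _; ring.
  by rewrite S1 dpsi_row // /eta Jint_deta // /dy /F; ring.
- by move=> j; rewrite big_split /= S2 dpsi_col; ring.
- split=> [i|j]; first by rewrite addr_ge0 ?dy_ge0.
  by rewrite mulr_ge0 ?subr_ge0.
rewrite sum_y_dy // sum_zh //; apply: min_eq0_matched => //.
- by apply: sumr_ge0 => i _.
- exact: Ztot_ge0.
- exact: Ftot_ge0.
Qed.

Lemma exists_perturbed_solution :
  exists (psih : 'I_nI -> 'I_nJ -> R -> R) (yh : 'I_nI -> R -> R)
         (zh : 'I_nJ -> R -> R) (wh : 'I_nI -> R -> R) (eta : 'I_nI -> R -> R),
    [/\ (forall i j, regular_on T (psih i j)),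
        (forall i, regular_on T (yh i)),
        (forall j, regular_on T (zh j)),
        (forall i, regular_on T (wh i)) &
        system_S E mu theta T psih yh zh wh] /\
    [/\ (forall t, t \in `[0, T] ->
           \sum_(i < nI) y i t <= \sum_(i < nI) yh i t /\
           \sum_(j < nJ) zh j t <= \sum_(j < nJ) z j t),
        (forall i t, t \in `[0, T] -> wh i t = w i t + f i t + eta i t),
        (forall i, {within `[0, T], continuous (eta i)}) &
        (forall i, [/\ (forall s t, s \in `[0, T] -> t \in `[0, T] -> s <= t -> eta i s <= eta i t),
                    (forall t, t \in `[0, T] -> 0 <= eta i t) &
                    (forall t, t \in `[0, T] ->
                       eta i t <= m5 * T * \sum_(i' < nI) supnormT T (f i'))])].
Proof.
exists (fun i j t => psi i j t + dpsi i j t), (fun i t => y i t + dy i t),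
  (fun j t => (1 - lamZ t) * z j t), (fun i t => w i t + f i t + eta i t), eta.
split; split => //.
- by move=> i j; exact: regular_onD (psi_reg i j) (regular_on_dpsi i j).
- by move=> i; exact: regular_onD (y_reg i) (regular_on_dy i).
- by move=> j; exact: regular_onM (regular_onB (regular_on_cst _ _) regular_on_lamZ) (z_reg j).
- by move=> i; exact: regular_onD (regular_onD (w_reg i) (f_reg i)) (regular_on_eta i).
- exact: system_S_hat.
- move=> t tT; rewrite sum_y_dy // sum_zh // lerDl gerBl subr_ge0 ge_min lexx.
  by rewrite le_min Ftot_ge0 ?Ztot_ge0.
- exact: continuous_eta.
- by move=> i; split; [exact: eta_homo|exact: eta_ge0|exact: eta_le].
Qed.

End Construction.

Unset Implicit Arguments.

Theorem lemma2 (R : realType) (nI nJ : nat) (E : {set 'I_nI * 'I_nJ})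
  (mu : 'I_nI -> 'I_nJ -> R) (theta : 'I_nI -> R) :
  (forall i j, (i, j) \in E -> 0 < mu i j) ->
  (forall i j, (i, j) \notin E -> mu i j = 0) ->
  (forall i, 0 <= theta i) ->
  is_tree E -> diameter_eq E 3 ->
  exists m5 : R,
  forall (T : R), 0 < T ->
  forall (psi : 'I_nI -> 'I_nJ -> R -> R) (y : 'I_nI -> R -> R)
         (z : 'I_nJ -> R -> R) (w : 'I_nI -> R -> R),
    (forall i j, regular_on T (psi i j)) ->
    (forall i, regular_on T (y i)) ->
    (forall j, regular_on T (z j)) ->
    (forall i, regular_on T (w i)) ->
    system_S E mu theta T psi y z w ->
  forall f : 'I_nI -> R -> R,
    (forall i, regular_on T (f i)) ->
    (forall i t, t \in `[0, T] -> 0 <= f i t) ->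
  exists (psih : 'I_nI -> 'I_nJ -> R -> R) (yh : 'I_nI -> R -> R)
         (zh : 'I_nJ -> R -> R) (wh : 'I_nI -> R -> R) (eta : 'I_nI -> R -> R),
    [/\ (forall i j, regular_on T (psih i j)),
        (forall i, regular_on T (yh i)),
        (forall j, regular_on T (zh j)),
        (forall i, regular_on T (wh i)) &
        system_S E mu theta T psih yh zh wh] /\
    [/\
        (forall t, t \in `[0, T] ->
           \sum_(i < nI) y i t <= \sum_(i < nI) yh i t /\
           \sum_(j < nJ) zh j t <= \sum_(j < nJ) z j t),
        (forall i t, t \in `[0, T] -> wh i t = w i t + f i t + eta i t),
        (forall i, {within `[0, T], continuous (eta i)}) &
        (forall i, [/\ (forall s t, s \in `[0, T] -> t \in `[0, T] -> s <= t -> eta i s <= eta i t),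
                    (forall t, t \in `[0, T] -> 0 <= eta i t) &
                    (forall t, t \in `[0, T] ->
                       eta i t <= m5 * T * \sum_(i' < nI) supnormT T (f i'))])].
Proof.
move=> mu_gt0 mu_out theta_ge0 tree diam.
have [[i0 i0_hub] [j0 j0_hub]] := tree_diameter3_double_star tree diam.
exists (m5 mu theta i0 j0) => T T_gt0 psi y z w psi_reg y_reg z_reg w_reg sys f f_reg f_ge0.
exact: exists_perturbed_solution.
Qed.
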